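(* Let $B$ be a (closed, filled) convex $n$-sided polygon in $D$ with $n\geq 2$ such that $\rho(\psi_B)$ is rational. Then $\psi_B$ is not conjugate to a rotation.
   Context: $D$ is the open unit disk in $\mathbb R^2$, $S^1$ its boundary circle identified with $\mathbb R/\mathbb Z$ via the counterclockwise normalized angle. For a closed convex $U\subset D$ and $v\in S^1$, $\psi_U(v)$ is the point $w\in S^1\setminus\{v\}$ such that the line $vw$ meets $U$ and $U$ lies in the closed half-plane to the left of the directed line from $v$ to $w$; it is an orientation-preserving homeomorphism of $S^1$. For such $f$, $\rho(f)=\lim_{n\to\infty}(\overline f^n(x)-x)/n$ with $\overline f$ the lift to $\mathbb R$ satisfying $\overline f(0)\in[0,1)$. ''Conjugate to a rotation'' means $h\circ\psi_B\circ h^{-1}$ is a rigid rotation of $S^1$ for some homeomorphism $h$ of $S^1$. *)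

From Stdlib Require Import Reals Lra ClassicalEpsilon.
Open Scope R_scope.

Definition pt := (R * R)%type.

Definition in_disk (p : pt) : Prop := fst p ^ 2 + snd p ^ 2 < 1.
Definition on_circle (p : pt) : Prop := fst p ^ 2 + snd p ^ 2 = 1.

(* Identification R/Z -> S^1 by counterclockwise normalized angle. *)
Definition e (t : R) : pt := (cos (2 * PI * t), sin (2 * PI * t)).

Definition dist2 (p q : pt) : R := sqrt ((fst p - fst q) ^ 2 + (snd p - snd q) ^ 2).

(* cross product of (q - p) and (u - p): >= 0 iff u is in the closed
   half-plane to the left of the directed line from p to q *)
Definition cross (p q u : pt) : R :=
  (fst q - fst p) * (snd u - snd p) - (snd q - snd p) * (fst u - fst p).

Definition psi_rel (U : pt -> Prop) (v w : pt) : Prop :=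
  on_circle w /\ w <> v /\
  (exists u t, U u /\ u = (fst v + t * (fst w - fst v), snd v + t * (snd w - snd v))) /\
  (forall u, U u -> 0 <= cross v w u).

(* psi_U(v): the (unique, for U as in the paper) point with the property above. *)
Definition psi (U : pt -> Prop) (v : pt) : pt :=
  epsilon (inhabits v) (fun w => psi_rel U v w).

Fixpoint rsum (f : nat -> R) (n : nat) : R :=
  match n with O => 0 | S m => rsum f m + f m end.

Definition in_hull (I : nat -> Prop) (n : nat) (P : nat -> pt) (x : pt) : Prop :=
  exists l : nat -> R,
    (forall i, (i < n)%nat -> 0 <= l i) /\
    (forall i, (i < n)%nat -> ~ I i -> l i = 0) /\
    rsum l n = 1 /\
    x = (rsum (fun i => l i * fst (P i)) n, rsum (fun i => l i * snd (P i)) n).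

(* B is a closed filled convex n-gon with vertices P 0, ..., P (n-1):
   B is the convex hull of the P i, which are in convex position
   (no vertex lies in the convex hull of the others). *)
Definition convex_polygon (n : nat) (P : nat -> pt) (B : pt -> Prop) : Prop :=
  (forall x, B x <-> in_hull (fun _ => True) n P x) /\
  (forall j, (j < n)%nat -> ~ in_hull (fun i => i <> j) n P (P j)).

Definition circle_continuous (f : pt -> pt) : Prop :=
  forall x, on_circle x -> forall eps, 0 < eps -> exists delta, 0 < delta /\
    forall y, on_circle y -> dist2 y x < delta -> dist2 (f y) (f x) < eps.

Definition circle_homeo (h : pt -> pt) : Prop :=
  (forall x, on_circle x -> on_circle (h x)) /\ circle_continuous h /\
  exists g : pt -> pt,
    (forall x, on_circle x -> on_circle (g x)) /\ circle_continuous g /\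
    (forall x, on_circle x -> g (h x) = x) /\
    (forall x, on_circle x -> h (g x) = x).

Definition rot (a : R) (p : pt) : pt :=
  (cos a * fst p - sin a * snd p, sin a * fst p + cos a * snd p).

Definition conj_to_rotation (f : pt -> pt) : Prop :=
  exists h a, circle_homeo h /\ forall x, on_circle x -> h (f x) = rot a (h x).

Definition is_lift (f : pt -> pt) (F : R -> R) : Prop :=
  continuity F /\ (forall t, e (F t) = f (e t)) /\ 0 <= F 0 < 1.

Definition rotation_number_is (f : pt -> pt) (r : R) : Prop :=
  exists F, is_lift f F /\
    forall x, Un_cv (fun n => (Nat.iter n F x - x) / INR n) r.

Definition is_rational (r : R) : Prop :=
  exists p q : Z, (0 < q)%Z /\ r = IZR p / IZR q.

From Stdlib Require Import Reals Lra Lia Psatz ClassicalEpsilon Classical ZArith.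
Open Scope R_scope.

(* In half-angle coordinates, where the point e t of S^1 is the "square" of
   half_pt t = (cos (PI t), sin (PI t)), the chord map v |-> exit_point p v through a
   point p of the disk is the projective action of a 2x2 matrix chord_mat p.  Hence
   psi_B is piecewise projective: just after (before) e s it is the chord map through
   the vertex of B on the chord from e s to psi_B (e s) that is nearest to psi_B (e s)
   (to e s).  The projective derivative of chord_mat p at e s is (1 - c) / c times a
   factor independent of p, c being the position of p on the chord, so the right
   derivative of psi_B never exceeds the left one, and is strictly smaller at the
   point of S^1 behind an edge of B.  If psi_B were conjugate to a rotation with
   rational rotation number, it would have a periodic point and hence be periodic,
   psi_B^q = id.  By the chain rule along the orbit, the right derivative of psi_B^q
   at the point behind an edge would then be smaller than the left one, although
   both equal 1. *)

(** * Finite sums and convex hulls *)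

Lemma rsum_ext f g n : (forall i, (i < n)%nat -> f i = g i) -> rsum f n = rsum g n.
Proof.
  induction n as [|n IH]; intros H; simpl; [reflexivity|].
  rewrite IH, H; [reflexivity | lia | intros; apply H; lia].
Qed.

Lemma rsum_affine (l x y : nat -> R) a b c n :
  rsum (fun i => l i * (a + b * x i + c * y i)) n =
  a * rsum l n + b * rsum (fun i => l i * x i) n + c * rsum (fun i => l i * y i) n.
Proof. induction n as [|n IH]; simpl; [ring|]. rewrite IH; ring. Qed.

Lemma rsum_nonneg f n : (forall i, (i < n)%nat -> 0 <= f i) -> 0 <= rsum f n.
Proof.
  induction n as [|n IH]; intros H; simpl; [lra|].
  pose proof (H n ltac:(lia)). pose proof (IH ltac:(intros; apply H; lia)). lra.
Qed.

Lemma rsum_eq0_nonneg f n : (forall i, (i < n)%nat -> 0 <= f i) -> rsum f n = 0 ->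
  forall i, (i < n)%nat -> f i = 0.
Proof.
  induction n as [|n IH]; simpl; intros H E i Hi; [lia|].
  assert (0 <= rsum f n) by (apply rsum_nonneg; intros; apply H; lia).
  pose proof (H n ltac:(lia)).
  destruct (Nat.eq_dec i n) as [->|Ne]; [lra|].
  apply IH; [intros; apply H; lia | lra | lia].
Qed.

Lemma rsum_neq0 f n : rsum f n <> 0 -> exists i, (i < n)%nat /\ f i <> 0.
Proof.
  induction n as [|n IH]; simpl; intros H; [lra|].
  destruct (Req_dec (f n) 0) as [E|E].
  - destruct IH as [i [Hi Fi]]; [lra|]. exists i; split; [lia|exact Fi].
  - exists n; split; [lia|exact E].
Qed.

Lemma rsum_indicator f i n : (i < n)%nat ->
  rsum (fun k => if Nat.eqb k i then f k else 0) n = f i.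
Proof.
  induction n as [|n IH]; intros Hi; simpl; [lia|].
  destruct (Nat.eqb_spec n i) as [<-|Ne].
  - rewrite (rsum_ext _ (fun _ => 0));
      [|intros k Hk; destruct (Nat.eqb_spec k n); [lia|reflexivity]].
    enough (Z : forall m, rsum (fun _ => 0) m = 0) by (rewrite Z; ring).
    induction m as [|m IHm]; simpl; [reflexivity|]. rewrite IHm; ring.
  - rewrite IH by lia. ring.
Qed.

Lemma finite_argmin (S : nat -> Prop) (f : nat -> R) n :
  (exists i, (i < n)%nat /\ S i) ->
  exists i, (i < n)%nat /\ S i /\ forall j, (j < n)%nat -> S j -> f i <= f j.
Proof.
  induction n as [|n IH]; intros [i [Hi Si]]; [lia|].
  destruct (classic (exists i, (i < n)%nat /\ S i)) as [Ex|Nx].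
  - destruct (IH Ex) as [k [Hk [Sk Mk]]].
    destruct (classic (S n /\ f n < f k)) as [[Sn Lt]|Nn].
    + exists n; repeat split; [lia|exact Sn|]. intros j Hj Sj.
      destruct (Nat.eq_dec j n) as [->|Ne]; [lra|]. pose proof (Mk j ltac:(lia) Sj); lra.
    + exists k; repeat split; [lia|exact Sk|]. intros j Hj Sj.
      destruct (Nat.eq_dec j n) as [->|Ne]; [|apply Mk; [lia|exact Sj]].
      apply Rnot_lt_le. intro Lt. apply Nn. auto.
  - assert (i = n) as ->.
    { destruct (Nat.eq_dec i n) as [|Ne]; [assumption|].
      exfalso. apply Nx. exists i; split; [lia|exact Si]. }
    exists n; repeat split; [lia|exact Si|]. intros j Hj Sj.
    destruct (Nat.eq_dec j n) as [->|Ne]; [lra|]. exfalso. apply Nx. exists j; split; [lia|exact Sj].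
Qed.

Lemma finite_argmax (S : nat -> Prop) (f : nat -> R) n :
  (exists i, (i < n)%nat /\ S i) ->
  exists i, (i < n)%nat /\ S i /\ forall j, (j < n)%nat -> S j -> f j <= f i.
Proof.
  intros H. destruct (finite_argmin S (fun i => - f i) n H) as [i [Hi [Si M]]].
  exists i; repeat split; [exact Hi|exact Si|]. intros j Hj Sj. specialize (M j Hj Sj). lra.
Qed.

Lemma in_hull_vertex (I : nat -> Prop) n P i : (i < n)%nat -> I i -> in_hull I n P (P i).
Proof.
  intros Hi Ii. exists (fun k => if Nat.eqb k i then 1 else 0). repeat split.
  - intros k _. destruct (Nat.eqb k i); lra.
  - intros k _ Nk. destruct (Nat.eqb_spec k i) as [->|]; [contradiction|reflexivity].
  - exact (rsum_indicator (fun _ => 1) i n Hi).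
  - destruct (P i) as [a b] eqn:E. f_equal.
    + rewrite (rsum_ext _ (fun k => if Nat.eqb k i then fst (P k) else 0)),
        rsum_indicator, E by (try intros k _; try destruct (Nat.eqb k i); try ring; assumption).
      reflexivity.
    + rewrite (rsum_ext _ (fun k => if Nat.eqb k i then snd (P k) else 0)),
        rsum_indicator, E by (try intros k _; try destruct (Nat.eqb k i); try ring; assumption).
      reflexivity.
Qed.

Lemma cross_convex_comb v w (l : nat -> R) n (P : nat -> pt) : rsum l n = 1 ->
  cross v w (rsum (fun i => l i * fst (P i)) n, rsum (fun i => l i * snd (P i)) n) =
  rsum (fun i => l i * cross v w (P i)) n.
Proof.
  intros Hs.
  set (a := fst v * (snd w - snd v) - snd v * (fst w - fst v)).
  rewrite (rsum_ext (fun i => l i * cross v w (P i))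
    (fun i => l i * (a + (- (snd w - snd v)) * fst (P i) + (fst w - fst v) * snd (P i))))
    by (intros; unfold a, cross; ring).
  rewrite rsum_affine, Hs. unfold a, cross; simpl. ring.
Qed.

Lemma in_hull_cross_nonneg I n P v w x : in_hull I n P x ->
  (forall i, (i < n)%nat -> 0 <= cross v w (P i)) -> 0 <= cross v w x.
Proof.
  intros [l [Hl [_ [Hs ->]]]] H. rewrite cross_convex_comb by exact Hs.
  apply rsum_nonneg. intros i Hi. apply Rmult_le_pos; [apply Hl|apply H]; exact Hi.
Qed.

Lemma in_hull_cross_eq0 I n P v w x : in_hull I n P x ->
  (forall i, (i < n)%nat -> 0 <= cross v w (P i)) -> cross v w x = 0 ->
  exists i, (i < n)%nat /\ cross v w (P i) = 0.
Proof.
  intros [l [Hl [_ [Hs ->]]]] H E. rewrite cross_convex_comb in E by exact Hs.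
  assert (Z := rsum_eq0_nonneg _ _
    ltac:(intros i Hi; apply Rmult_le_pos; [apply Hl|apply H]; exact Hi) E).
  destruct (rsum_neq0 l n ltac:(lra)) as [i [Hi Li]].
  exists i; split; [exact Hi|]. specialize (Z i Hi).
  apply Rmult_integral in Z as [Z|Z]; [contradiction|exact Z].
Qed.

(** * Chords of the unit circle *)

Definition dot (p q : pt) : R := fst p * fst q + snd p * snd q.
Definition wedge (p q : pt) : R := fst p * snd q - snd p * fst q.
Definition norm2 (p : pt) : R := fst p ^ 2 + snd p ^ 2.
Definition sqdist (p q : pt) : R := (fst p - fst q) ^ 2 + (snd p - snd q) ^ 2.
Definition line_pt (v w : pt) (l : R) : pt :=
  (fst v + l * (fst w - fst v), snd v + l * (snd w - snd v)).

Lemma pow2_pos x : x <> 0 -> 0 < x ^ 2.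
Proof. intros H. destruct (Rtotal_order x 0) as [h|[h|h]]; [nra|contradiction|nra]. Qed.

Lemma sqdist_pos p q : p <> q -> 0 < sqdist p q.
Proof.
  destruct p as [a b], q as [c d]; unfold sqdist; cbn [fst snd]; intros H.
  destruct (Req_dec a c) as [E1|E1].
  - assert (b <> d) by (intros E2; apply H; subst; reflexivity).
    pose proof (pow2_pos (b - d) ltac:(lra)). pose proof (pow2_ge_0 (a - c)). lra.
  - pose proof (pow2_pos (a - c) ltac:(lra)). pose proof (pow2_ge_0 (b - d)). lra.
Qed.

Lemma cross_line_pt v w l u : cross v (line_pt v w l) u = l * cross v w u.
Proof. unfold cross, line_pt; cbn [fst snd]; ring. Qed.

Lemma cross_at_line_pt v w u l : cross v w (line_pt v u l) = l * cross v w u.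
Proof. unfold cross, line_pt; cbn [fst snd]; ring. Qed.

Lemma cross_line_pts v w l1 l2 c :
  cross c (line_pt v w l1) (line_pt v w l2) = (l2 - l1) * cross v w c.
Proof. unfold cross, line_pt; cbn [fst snd]; ring. Qed.

Lemma dot_lt_1 v p : on_circle v -> in_disk p -> dot v p < 1.
Proof.
  unfold on_circle, in_disk, dot; destruct v as [a b], p as [c d]; cbn [fst snd]; intros H1 H2.
  assert ((a*c + b*d)^2 + (a*d - b*c)^2 = (a^2 + b^2) * (c^2 + d^2)) by ring.
  pose proof (pow2_ge_0 (a*d - b*c)). nra.
Qed.

Lemma disk_neq_circle v p : on_circle v -> in_disk p -> p <> v.
Proof. intros H1 H2 ->. unfold on_circle, in_disk in *; lra. Qed.

Lemma line_pt_in_disk v w t : on_circle v -> on_circle w -> w <> v ->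
  in_disk (line_pt v w t) -> 0 < t < 1.
Proof.
  intros Hv Hw Hne Hd. pose proof (sqdist_pos _ _ Hne) as Q.
  unfold on_circle, in_disk, sqdist, line_pt in *; destruct v as [a b], w as [c d]; cbn [fst snd] in *.
  assert (E : (a + t*(c - a))^2 + (b + t*(d - b))^2 = 1 - t*(1 - t)*((c - a)^2 + (d - b)^2)) by nra.
  assert (0 < t * (1 - t)) by (apply (Rmult_lt_reg_r ((c - a)^2 + (d - b)^2)); lra).
  destruct (Rlt_or_le 0 t); [split; nra | nra].
Qed.

(* The line from v through p meets the circle again at parameter exit_param p v. *)
Definition exit_param (p v : pt) : R := 2 * (1 - dot v p) / sqdist p v.
Definition exit_point (p v : pt) : pt := line_pt v p (exit_param p v).

Lemma exit_param_pos p v : on_circle v -> in_disk p -> 0 < exit_param p v.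
Proof.
  intros Hv Hp. pose proof (dot_lt_1 v p Hv Hp). pose proof (sqdist_pos _ _ (disk_neq_circle v p Hv Hp)).
  unfold exit_param. apply Rdiv_lt_0_compat; lra.
Qed.

Lemma exit_point_on_circle p v : on_circle v -> in_disk p -> on_circle (exit_point p v).
Proof.
  intros Hv Hp. pose proof (sqdist_pos _ _ (disk_neq_circle v p Hv Hp)) as Q.
  unfold on_circle, exit_point, exit_param, line_pt, sqdist, dot in *;
    destruct v as [a b], p as [c d]; cbn [fst snd] in *.
  set (D := (c - a)^2 + (d - b)^2) in *. set (T := 2 * (1 - (a*c + b*d)) / D).
  assert (ET : T * D = 2 * (1 - (a*c + b*d))) by (unfold T; field; lra).
  transitivity ((a^2 + b^2) + T * (T * D - 2 * (1 - (a*c + b*d))) + 2*T*(1 - (a^2 + b^2)));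
    [unfold D; ring | rewrite ET, Hv; ring].
Qed.

Lemma exit_point_neq p v : on_circle v -> in_disk p -> exit_point p v <> v.
Proof.
  intros Hv Hp E. pose proof (exit_param_pos p v Hv Hp). apply (disk_neq_circle v p Hv Hp).
  unfold exit_point, line_pt in E. destruct v as [a b], p as [c d]; cbn [fst snd] in *.
  injection E; intros E1 E2. f_equal; nra.
Qed.

Lemma cross_exit_point p v u : cross v (exit_point p v) u = exit_param p v * cross v p u.
Proof. apply cross_line_pt. Qed.

Lemma psi_rel_exit_point (U : pt -> Prop) p v : on_circle v -> in_disk p -> U p ->
  (forall u, U u -> 0 <= cross v p u) -> psi_rel U v (exit_point p v).
Proof.
  intros Hv Hp Up H. pose proof (exit_param_pos p v Hv Hp).
  split; [now apply exit_point_on_circle|]. split; [now apply exit_point_neq|]. split.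
  - exists p, (/ exit_param p v). split; [exact Up|].
    unfold exit_point, line_pt; destruct p as [c d]; cbn [fst snd]. f_equal; field; lra.
  - intros u Uu. rewrite cross_exit_point. apply Rmult_le_pos; [lra|auto].
Qed.

Lemma circle_collinear_eq v w1 w2 : on_circle v -> on_circle w1 -> on_circle w2 ->
  w1 <> v -> w2 <> v -> cross v w1 w2 = 0 -> w1 = w2.
Proof.
  intros Hv H1 H2 N1 N2 C. pose proof (sqdist_pos _ _ N1) as Q.
  unfold on_circle, cross, sqdist in *; destruct v as [a b], w1 as [c d], w2 as [e f]; cbn [fst snd] in *.
  set (D := (c - a)^2 + (d - b)^2) in *.
  set (mu := ((c - a)*(e - a) + (d - b)*(f - b)) / D).
  assert (Ex : e - a = mu * (c - a)).
  { unfold mu. apply (Rmult_eq_reg_r D); [|lra].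
    replace (_ / D * (c - a) * D) with (((c - a)*(e - a) + (d - b)*(f - b)) * (c - a)) by (field; lra).
    transitivity (((c - a)*(e - a) + (d - b)*(f - b)) * (c - a)
                  - (d - b) * ((c - a)*(f - b) - (d - b)*(e - a))); [unfold D; ring | rewrite C; ring]. }
  assert (Ey : f - b = mu * (d - b)).
  { unfold mu. apply (Rmult_eq_reg_r D); [|lra].
    replace (_ / D * (d - b) * D) with (((c - a)*(e - a) + (d - b)*(f - b)) * (d - b)) by (field; lra).
    transitivity (((c - a)*(e - a) + (d - b)*(f - b)) * (d - b)
                  + (c - a) * ((c - a)*(f - b) - (d - b)*(e - a))); [unfold D; ring | rewrite C; ring]. }
  assert (Hmu0 : mu <> 0) by (intros Z; rewrite Z in Ex, Ey; apply N2; f_equal; lra).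
  assert (K1 : 2 * (a*(c - a) + b*(d - b)) + D = 0) by (unfold D; nra).
  assert (K2 : mu * (2 * (a*(c - a) + b*(d - b)) + mu * D) = 0).
  { replace e with (a + mu*(c - a)) in H2 by lra. replace f with (b + mu*(d - b)) in H2 by lra.
    unfold D; nra. }
  apply Rmult_integral in K2 as [K2|K2]; [contradiction|].
  assert (K3 : (mu - 1) * D = 0) by lra.
  apply Rmult_integral in K3 as [K3|K3]; [|lra].
  f_equal; nra.
Qed.

Lemma psi_rel_unique (U : pt -> Prop) v w1 w2 : on_circle v -> (forall x, U x -> in_disk x) ->
  psi_rel U v w1 -> psi_rel U v w2 -> w1 = w2.
Proof.
  intros Hv HD [C1 [N1 [[u1 [t1 [U1 E1]]] L1]]] [C2 [N2 [[u2 [t2 [U2 E2]]] L2]]].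
  change (u1 = line_pt v w1 t1) in E1. change (u2 = line_pt v w2 t2) in E2.
  assert (T1 := line_pt_in_disk v w1 t1 Hv C1 N1 ltac:(rewrite <- E1; auto)).
  assert (T2 := line_pt_in_disk v w2 t2 Hv C2 N2 ltac:(rewrite <- E2; auto)).
  specialize (L1 u2 U2). specialize (L2 u1 U1). subst u1 u2.
  apply circle_collinear_eq with v; auto.
  rewrite cross_at_line_pt in L1, L2.
  assert (S : cross v w2 w1 = - cross v w1 w2) by (unfold cross; ring).
  rewrite S in L2. nra.
Qed.

(* A projective coordinate on the pencil of lines through v in S^1: by
   [cross_slope], p' lies left of the line v -> p iff its slope is larger. *)
Definition slope (v p : pt) : R := - wedge v p / (1 - dot v p).

Lemma cross_slope v p p' : on_circle v -> dot v p <> 1 -> dot v p' <> 1 ->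
  cross v p p' = (1 - dot v p) * (1 - dot v p') * (slope v p' - slope v p).
Proof.
  intros Hv Hp Hp'. unfold slope, cross, dot, wedge, on_circle in *.
  destruct v as [a b], p as [c d], p' as [e f]; cbn [fst snd] in *.
  transitivity (- (1 - (a*c + b*d)) * (a*f - b*e) + (1 - (a*e + b*f)) * (a*d - b*c)).
  - transitivity ((c - a)*(f - b) - (d - b)*(e - a) - (1 - (a^2 + b^2)) * (c*f - d*e));
      [rewrite Hv; ring | ring].
  - field. split; lra.
Qed.

Section Polygon.

Variables (n : nat) (P : nat -> pt) (B : pt -> Prop).
Hypothesis polyB : convex_polygon n P B.
Hypothesis B_in_disk : forall x, B x -> in_disk x.

Lemma vertex_in_B i : (i < n)%nat -> B (P i).
Proof. intros Hi. apply (proj1 polyB). now apply in_hull_vertex. Qed.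

Lemma vertex_in_disk i : (i < n)%nat -> in_disk (P i).
Proof. intros Hi. now apply B_in_disk, vertex_in_B. Qed.

Lemma vertices_distinct i j : (i < n)%nat -> (j < n)%nat -> i <> j -> P i <> P j.
Proof.
  intros Hi Hj Hij E. apply (proj2 polyB j Hj). rewrite <- E.
  apply in_hull_vertex; [exact Hi | exact Hij].
Qed.

Lemma cross_nonneg_B v w : (forall i, (i < n)%nat -> 0 <= cross v w (P i)) ->
  forall u, B u -> 0 <= cross v w u.
Proof. intros H u Hu. apply (proj1 polyB) in Hu. eapply in_hull_cross_nonneg; eauto. Qed.

Lemma supporting_vertex v : (0 < n)%nat -> on_circle v ->
  exists k, (k < n)%nat /\ forall i, (i < n)%nat -> 0 <= cross v (P k) (P i).
Proof.
  intros Hn Hv.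
  destruct (finite_argmin (fun _ => True) (fun i => slope v (P i)) n
    ltac:(exists 0%nat; split; [exact Hn | exact I])) as [k [Hk [_ M]]].
  exists k; split; [exact Hk|]. intros i Hi.
  pose proof (dot_lt_1 v (P k) Hv (vertex_in_disk k Hk)).
  pose proof (dot_lt_1 v (P i) Hv (vertex_in_disk i Hi)).
  rewrite cross_slope by (auto; lra).
  specialize (M i Hi I). apply Rmult_le_pos; [apply Rmult_le_pos|]; lra.
Qed.

Lemma psi_rel_vertex v k : (k < n)%nat -> on_circle v ->
  (forall i, (i < n)%nat -> 0 <= cross v (P k) (P i)) -> psi_rel B v (exit_point (P k) v).
Proof.
  intros Hk Hv H. apply psi_rel_exit_point; auto using vertex_in_disk, vertex_in_B.
  now apply cross_nonneg_B.
Qed.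

Lemma psi_spec v : (0 < n)%nat -> on_circle v -> psi_rel B v (psi B v).
Proof.
  intros Hn Hv. destruct (supporting_vertex v Hn Hv) as [k [Hk H]].
  unfold psi. apply epsilon_spec. exists (exit_point (P k) v). now apply psi_rel_vertex.
Qed.

Lemma psi_eq_exit_point v k : (k < n)%nat -> on_circle v ->
  (forall i, (i < n)%nat -> 0 <= cross v (P k) (P i)) -> psi B v = exit_point (P k) v.
Proof.
  intros Hk Hv H. apply (psi_rel_unique B v); auto.
  - apply psi_spec; [lia | exact Hv].
  - now apply psi_rel_vertex.
Qed.

Lemma edge_exists : (2 <= n)%nat -> exists ia ib, (ia < n)%nat /\ (ib < n)%nat /\
  P ia <> P ib /\ forall i, (i < n)%nat -> 0 <= cross (P ia) (P ib) (P i).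
Proof.
  intros Hn.
  (* From a rightmost vertex i1, the edge goes vertically if another vertex has the same
     abscissa, and otherwise to the vertex k of steepest slope as seen from i1. *)
  destruct (finite_argmax (fun _ => True) (fun i => fst (P i)) n
    ltac:(exists 0%nat; split; [lia | exact I])) as [i1 [Hi1 [_ M1]]].
  destruct (classic (exists j, (j < n)%nat /\ j <> i1 /\ fst (P j) = fst (P i1)))
    as [[j [Hj [Nj Ej]]]|NA].
  - assert (Hne : P j <> P i1) by (apply vertices_distinct; auto).
    assert (Sne : snd (P j) <> snd (P i1)).
    { intros E2. apply Hne. destruct (P j), (P i1); cbn [fst snd] in *; subst; reflexivity. }
    assert (Hc : forall a b, fst (P a) = fst (P i1) -> fst (P b) = fst (P i1) ->
      snd (P b) <= snd (P a) -> forall i, (i < n)%nat -> 0 <= cross (P b) (P a) (P i)).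
    { intros a b Ea Eb Lab i Hi. specialize (M1 i Hi I). unfold cross. rewrite Ea, Eb.
      replace ((fst (P i1) - fst (P i1)) * (snd (P i) - snd (P b))
               - (snd (P a) - snd (P b)) * (fst (P i) - fst (P i1)))
        with ((snd (P b) - snd (P a)) * (fst (P i) - fst (P i1))) by ring.
      nra. }
    destruct (Rlt_or_le (snd (P j)) (snd (P i1))).
    + exists j, i1. repeat split; auto. apply Hc; auto; lra.
    + exists i1, j. repeat split; auto.
  - assert (Lt : forall j, (j < n)%nat -> j <> i1 -> fst (P j) < fst (P i1)).
    { intros j Hj Nj. destruct (M1 j Hj I); auto. exfalso; apply NA; exists j; auto. }
    destruct (finite_argmax (fun j => j <> i1)
      (fun j => (snd (P j) - snd (P i1)) / (fst (P i1) - fst (P j))) n) as [k [Hk [Nk Mk]]].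
    { destruct (Nat.eq_dec i1 0); [exists 1%nat | exists 0%nat]; split; lia. }
    exists i1, k. repeat split; auto.
    { apply vertices_distinct; auto. }
    intros i Hi. destruct (Nat.eq_dec i i1) as [->|Ni]; [unfold cross; lra|].
    specialize (Mk i Hi Ni). pose proof (Lt i Hi Ni). pose proof (Lt k Hk Nk).
    set (ak := fst (P i1) - fst (P k)) in *. set (ai := fst (P i1) - fst (P i)) in *.
    set (bk := snd (P k) - snd (P i1)) in *. set (bi := snd (P i) - snd (P i1)) in *.
    assert (E : cross (P i1) (P k) (P i) = ak * ai * (bk / ak - bi / ai)).
    { unfold cross, ak, ai, bk, bi. field. split; lra. }
    rewrite E. apply Rmult_le_pos; [apply Rmult_le_pos|]; unfold ak, ai in *; lra.
Qed.

End Polygon.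

(** * Lifts and rotation numbers *)

Lemma e_on_circle t : on_circle (e t).
Proof. unfold on_circle, e; cbn [fst snd]. rewrite <- (sin2_cos2 (2*PI*t)). unfold Rsqr; ring. Qed.

Lemma e_add_Z t k : e (t + IZR k) = e t.
Proof.
  assert (S : sin (PI * IZR k) = 0) by (apply sin_eq_0_1; exists k; ring).
  assert (C2 : cos (2 * (PI * IZR k)) = 1) by (rewrite cos_2a_sin, S; ring).
  assert (S2 : sin (2 * (PI * IZR k)) = 0) by (rewrite sin_2a, S; ring).
  unfold e. replace (2 * PI * (t + IZR k)) with (2 * PI * t + 2 * (PI * IZR k)) by ring.
  rewrite cos_plus, sin_plus, C2, S2. f_equal; ring.
Qed.

Lemma e_eq_Z x y : e x = e y -> exists k, x = y + IZR k.
Proof.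
  unfold e; intros E. injection E; intros Es Ec.
  assert (C : cos (2 * (PI * (x - y))) = 1).
  { replace (2 * (PI * (x - y))) with (2*PI*x - 2*PI*y) by ring.
    rewrite cos_minus, Ec, Es, <- (sin2_cos2 (2*PI*y)). unfold Rsqr; ring. }
  rewrite cos_2a_sin in C. assert (S : sin (PI * (x - y)) = 0) by nra.
  destruct (sin_eq_0_0 _ S) as [k Hk]. exists k. pose proof PI_RGT_0.
  apply (Rmult_eq_reg_l PI); lra.
Qed.

Lemma e_surj p : on_circle p -> exists t, e t = p.
Proof.
  unfold on_circle; destruct p as [x y]; cbn [fst snd]; intros H. pose proof PI_RGT_0.
  assert (Sy : sqrt (1 - x²) = Rabs y).
  { replace (1 - x²) with (y²) by (unfold Rsqr; lra). apply sqrt_Rsqr_abs. }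
  destruct (Rle_or_lt 0 y).
  - exists (acos x / (2 * PI)). unfold e.
    replace (2 * PI * (acos x / (2 * PI))) with (acos x) by (field; lra).
    rewrite cos_acos, sin_acos, Sy, Rabs_right; auto; nra.
  - exists (- acos x / (2 * PI)). unfold e.
    replace (2 * PI * (- acos x / (2 * PI))) with (- acos x) by (field; lra).
    rewrite cos_neg, sin_neg, cos_acos, sin_acos, Sy, Rabs_left; auto; [f_equal; lra | nra | nra].
Qed.

Lemma e_iter (f : pt -> pt) (F : R -> R) : (forall t, e (F t) = f (e t)) ->
  forall m t, e (Nat.iter m F t) = Nat.iter m f (e t).
Proof. intros H m t; induction m as [|m IH]; simpl; [reflexivity|]. rewrite H, IH; reflexivity. Qed.

Lemma iter_continuous F : continuity F -> forall m, continuity (fun x => Nat.iter m F x).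
Proof.
  intros H m. induction m as [|m IH]; simpl; [apply derivable_continuous, derivable_id|].
  exact (continuity_comp (fun x => Nat.iter m F x) F IH H).
Qed.

Lemma continuity_displacement G c : continuity G -> continuity (fun x => G x - x - c).
Proof.
  intros H. apply continuity_minus; [apply continuity_minus|].
  - exact H.
  - apply derivable_continuous, derivable_id.
  - apply continuity_const. intros ? ?; reflexivity.
Qed.

Lemma lift_displacement_bounds (f : pt -> pt) (F : R -> R) :
  continuity F -> (forall t, e (F t) = f (e t)) -> 0 <= F 0 < 1 ->
  (forall t, f (e t) <> e t) -> forall t, t < F t < t + 1.
Proof.
  intros Hc Hl H0 Hfix.
  assert (NI : forall t k, F t - t <> IZR k).
  { intros t k E. apply (Hfix t). rewrite <- Hl. replace (F t) with (t + IZR k) by lra. apply e_add_Z. }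
  assert (G0 : 0 < F 0 < 1) by (split; [destruct H0 as [[|E] _]; [assumption|] | lra];
    exfalso; apply (NI 0 0%Z); rewrite <- E; ring).
  assert (IVT_disp : forall t c, (F 0 - 0 - c) * (F t - t - c) <= 0 -> exists z, F z - z = c).
  { intros t c Hs.
    assert (Cg := continuity_displacement F c Hc).
    destruct (Rle_dec 0 t).
    - destruct (IVT_cor _ 0 t Cg r Hs) as [z [_ Hz]]. exists z; lra.
    - destruct (IVT_cor _ t 0 Cg ltac:(lra) ltac:(rewrite Rmult_comm; exact Hs)) as [z [_ Hz]].
      exists z; lra. }
  intros t. split.
  - apply Rnot_le_lt. intros Le. destruct (IVT_disp t 0 ltac:(nra)) as [z Hz]. exact (NI z 0%Z Hz).
  - apply Rnot_le_lt. intros Le. destruct (IVT_disp t 1 ltac:(nra)) as [z Hz]. exact (NI z 1%Z Hz).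
Qed.

Lemma lift_add_1 (f : pt -> pt) (F : R -> R) : (forall t, e (F t) = f (e t)) ->
  (forall t, t < F t < t + 1) -> forall t, F (t + 1) = F t + 1.
Proof.
  intros Hl Hb t.
  assert (E : e (F (t + 1)) = e (F t)) by (rewrite !Hl; f_equal; exact (e_add_Z t 1)).
  destruct (e_eq_Z _ _ E) as [k Hk]. pose proof (Hb t). pose proof (Hb (t + 1)).
  assert (k = 1%Z) as ->; [|rewrite Hk; reflexivity].
  assert (Hk2 : 0 < IZR k < 2) by lra. destruct Hk2 as [Ha Hb2].
  apply lt_IZR in Ha. apply lt_IZR in Hb2. lia.
Qed.

Section DegreeOne.

Variable F : R -> R.
Hypothesis F_add_1 : forall t, F (t + 1) = F t + 1.

Lemma lift_add_nat t N : F (t + INR N) = F t + INR N.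
Proof.
  induction N as [|N IH]; [simpl; rewrite !Rplus_0_r; reflexivity|].
  rewrite S_INR, <- !Rplus_assoc, F_add_1, IH. reflexivity.
Qed.

Lemma lift_add_Z t k : F (t + IZR k) = F t + IZR k.
Proof.
  destruct (Z_le_gt_dec 0 k).
  - replace k with (Z.of_nat (Z.to_nat k)) by lia. rewrite <- INR_IZR_INZ. apply lift_add_nat.
  - set (N := Z.to_nat (- k)).
    assert (E : IZR k = - INR N) by (unfold N; rewrite INR_IZR_INZ, <- opp_IZR; f_equal; lia).
    rewrite E. pose proof (lift_add_nat (t + - INR N) N) as H.
    replace (t + - INR N + INR N) with t in H by ring. lra.
Qed.

Lemma iter_add_Z m t k : Nat.iter m F (t + IZR k) = Nat.iter m F t + IZR k.
Proof. induction m as [|m IH]; simpl; [reflexivity|]. rewrite IH. apply lift_add_Z. Qed.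

Lemma iter_mul_drift q p c s : (forall z, c <= s * (Nat.iter q F z - z - p)) ->
  forall m x, INR m * c <= s * (Nat.iter (q * m) F x - x - INR m * p).
Proof.
  intros H m x. induction m as [|m IH].
  - rewrite Nat.mul_0_r. simpl. lra.
  - replace (q * S m)%nat with (q + q * m)%nat by lia. rewrite Nat.iter_add, S_INR.
    specialize (H (Nat.iter (q * m) F x)).
    replace (s * (Nat.iter q F (Nat.iter (q * m) F x) - x - (INR m + 1) * p)) with
      (s * (Nat.iter q F (Nat.iter (q * m) F x) - Nat.iter (q * m) F x - p)
       + s * (Nat.iter (q * m) F x - x - INR m * p)) by ring.
    lra.
Qed.

Lemma Un_cv_subseq_lower_bound (u : nat -> R) r s a q : (0 < q)%nat -> Un_cv u r ->
  (forall m, a <= s * u (q * S m)%nat) -> a <= s * r.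
Proof.
  intros Hq Hu H. apply Rnot_lt_le. intros Lt.
  pose proof (Rabs_pos s).
  destruct (Hu ((a - s * r) / (Rabs s + 1)) ltac:(apply Rdiv_lt_0_compat; lra)) as [N HN].
  specialize (HN (q * S N)%nat ltac:(nia)). specialize (H N). unfold R_dist in HN.
  set (d := u (q * S N)%nat - r) in *.
  assert (Sd : s * d <= Rabs s * Rabs d) by (rewrite <- Rabs_mult; apply Rle_abs).
  assert (Bd : Rabs s * Rabs d <= Rabs s * ((a - s * r) / (Rabs s + 1)))
    by (apply Rmult_le_compat_l; lra).
  assert (Rabs s * ((a - s * r) / (Rabs s + 1)) < a - s * r).
  { apply (Rmult_lt_reg_r (Rabs s + 1)); [lra|]. field_simplify; lra. }
  assert (s * u (q * S N)%nat - s * r = s * d) by (unfold d; ring).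
  lra.
Qed.

(* Otherwise F^q - id - p has a constant sign s and, being 1-periodic, s (F^q - id - p)
   is bounded below by some c > 0; then s r >= s p / q + c / q. *)
Lemma periodic_point q p r : (0 < q)%nat -> r = p / INR q -> continuity F ->
  Un_cv (fun n => (Nat.iter n F 0 - 0) / INR n) r -> exists x0, Nat.iter q F x0 = x0 + p.
Proof.
  intros Hq Hr Hc Hcv. apply NNPP; intros Hno.
  set (g := fun x => Nat.iter q F x - x - p).
  set (s := if Rlt_dec 0 (g 0) then 1 else -1).
  assert (Gc : continuity (fun x => s * g x)).
  { apply continuity_scal, continuity_displacement, iter_continuous, Hc. }
  assert (Gn : forall x, s * g x <> 0).
  { intros x E. apply Hno. exists x. unfold s in E.
    destruct (Rlt_dec 0 (g 0)); unfold g in E; lra. }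
  assert (Gpos : forall x, 0 < s * g x).
  { assert (G0 : 0 < s * g 0) by (pose proof (Gn 0); unfold s in *; destruct (Rlt_dec 0 (g 0)); lra).
    intros x. apply Rnot_le_lt. intros Le.
    destruct (Rle_dec 0 x).
    - destruct (IVT_cor _ 0 x Gc r0 ltac:(nra)) as [z [_ Hz]]. exact (Gn z Hz).
    - destruct (IVT_cor _ x 0 Gc ltac:(lra) ltac:(nra)) as [z [_ Hz]]. exact (Gn z Hz). }
  assert (Gper : forall x k, g (x + IZR k) = g x) by (intros; unfold g; rewrite iter_add_Z; ring).
  destruct (continuity_ab_min (fun x => s * g x) 0 1 ltac:(lra) (fun x _ => Gc x)) as [xm [Hm _]].
  assert (Hmin : forall z, s * g xm <= s * (Nat.iter q F z - z - p)).
  { intros z. destruct (archimed z) as [A1 A2]. change (s * g xm <= s * g z).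
    rewrite <- (Gper z (- (up z - 1))%Z). apply Hm.
    rewrite opp_IZR, minus_IZR. simpl. lra. }
  pose proof (Gpos xm) as Pm. assert (Qp : 0 < INR q) by (apply lt_0_INR; lia).
  assert (Lb : s * p / INR q + s * g xm / INR q <= s * r).
  { apply (Un_cv_subseq_lower_bound _ _ s _ q Hq Hcv). intros m.
    pose proof (iter_mul_drift q p _ s Hmin (S m) 0) as D.
    assert (0 < INR (S m)) by (apply lt_0_INR; lia).
    rewrite mult_INR. apply (Rmult_le_reg_r (INR q * INR (S m))); [nra|].
    replace ((s * p / INR q + s * g xm / INR q) * (INR q * INR (S m)))
      with (INR (S m) * s * g xm + s * (INR (S m) * p)) by (field; lra).
    replace (s * ((Nat.iter (q * S m) F 0 - 0) / (INR q * INR (S m))) * (INR q * INR (S m)))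
      with (s * Nat.iter (q * S m) F 0) by (field; lra).
    lra. }
  rewrite Hr in Lb. assert (0 < s * g xm / INR q) by (apply Rdiv_lt_0_compat; lra).
  replace (s * (p / INR q)) with (s * p / INR q) in Lb by (field; lra). lra.
Qed.

Lemma lift_increasing : continuity F -> (forall x y, F x = F y -> x = y) ->
  forall a b, a < b -> F a < F b.
Proof.
  intros Hc Hi a b Hab. apply Rnot_le_lt. intros Hle.
  assert (Hlt : F b < F a) by (destruct Hle as [|E]; [assumption|]; apply Hi in E; lra).
  destruct (archimed (F a - F b)) as [A1 _].
  destruct (IVT_cor (fun x => F x - F a) b (b + IZR (up (F a - F b))))
    as [z [Hz Ez]].
  - apply continuity_minus; [exact Hc | apply continuity_const; intros ? ?; reflexivity].
  - lra.
  - rewrite lift_add_Z. nra.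
  - assert (z = a) by (apply Hi; lra). lra.
Qed.

Lemma lift_injective_of_periodic (f : pt -> pt) q : (0 < q)%nat ->
  (forall t, e (F t) = f (e t)) -> (forall x, on_circle x -> Nat.iter q f x = x) ->
  forall x y, F x = F y -> x = y.
Proof.
  intros Hq Hl Per x y E. destruct q as [|m]; [lia|].
  assert (Exy : e x = e y).
  { rewrite <- (Per (e x)), <- (Per (e y)) by apply e_on_circle.
    rewrite !Nat.iter_succ_r, <- !Hl, E. reflexivity. }
  destruct (e_eq_Z _ _ Exy) as [k ->]. rewrite lift_add_Z in E.
  assert (IZR k = 0) as -> by lra. ring.
Qed.

End DegreeOne.

(** * Conjugacy to a rotation *)

Lemma rot_rot a b z : rot a (rot b z) = rot (a + b) z.
Proof. unfold rot; cbn [fst snd]. rewrite cos_plus, sin_plus. f_equal; ring. Qed.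

Lemma rot_0 z : rot 0 z = z.
Proof. unfold rot. rewrite cos_0, sin_0. destruct z; cbn [fst snd]; f_equal; ring. Qed.

Lemma rot_fixed_point b z : on_circle z -> rot b z = z -> forall y, rot b y = y.
Proof.
  unfold rot, on_circle; destruct z as [x y]; cbn [fst snd]; intros Hc E.
  injection E; intros E2 E1. pose proof (sin2_cos2 b) as S2. unfold Rsqr in S2.
  assert (K : ((cos b - 1)^2 + (sin b)^2) * (x^2 + y^2) = 0).
  { transitivity (((cos b - 1) * x - sin b * y)^2 + (sin b * x + (cos b - 1) * y)^2); [ring|].
    replace ((cos b - 1) * x - sin b * y) with 0 by lra.
    replace (sin b * x + (cos b - 1) * y) with 0 by lra. ring. }
  rewrite Hc in K. assert (Sb : sin b = 0) by nra. assert (Cb : cos b = 1) by nra.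
  intros [u w]. cbn [fst snd]. rewrite Sb, Cb. f_equal; ring.
Qed.

Lemma conj_rotation_iter (f h : pt -> pt) a :
  (forall x, on_circle x -> on_circle (f x)) ->
  (forall x, on_circle x -> h (f x) = rot a (h x)) ->
  forall m x, on_circle x ->
    h (Nat.iter m f x) = rot (INR m * a) (h x) /\ on_circle (Nat.iter m f x).
Proof.
  intros Hf Hh m x Hx; induction m as [|m [I1 I2]].
  - simpl. rewrite Rmult_0_l, rot_0. auto.
  - change (Nat.iter (S m) f x) with (f (Nat.iter m f x)).
    rewrite Hh, I1, rot_rot, S_INR by exact I2. split; [f_equal; ring | now apply Hf].
Qed.

Lemma conj_rotation_periodic (f : pt -> pt) q x0 :
  (forall x, on_circle x -> on_circle (f x)) -> conj_to_rotation f ->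
  on_circle x0 -> Nat.iter q f x0 = x0 -> forall x, on_circle x -> Nat.iter q f x = x.
Proof.
  intros Hf [h [a [[Hh [_ [g [_ [_ [Hgh _]]]]]] Hc]]] H0 P0 x Hx.
  destruct (conj_rotation_iter f h a Hf Hc q x0 H0) as [C0 _]. rewrite P0 in C0.
  assert (R := rot_fixed_point _ _ (Hh x0 H0) (eq_sym C0)).
  destruct (conj_rotation_iter f h a Hf Hc q x Hx) as [C I]. rewrite R in C.
  rewrite <- (Hgh _ I), C. now apply Hgh.
Qed.

(** * Half-angle coordinates *)

Definition scale (l : R) (p : pt) : pt := (l * fst p, l * snd p).
Definition half_pt (t : R) : pt := (cos (PI * t), sin (PI * t)).
Definition sq_dir (y : pt) : pt :=
  ((fst y ^ 2 - snd y ^ 2) / norm2 y, 2 * fst y * snd y / norm2 y).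

Definition mat := (R * R * R * R)%type.
Definition mat_app (M : mat) (y : pt) : pt :=
  let '(a, b, c, d) := M in (a * fst y + b * snd y, c * fst y + d * snd y).
Definition mat_mul (M N : mat) : mat :=
  let '(a, b, c, d) := M in let '(a', b', c', d') := N in
  (a * a' + b * c', a * b' + b * d', c * a' + d * c', c * b' + d * d').
Definition mat_det (M : mat) : R := let '(a, b, c, d) := M in a * d - b * c.
Definition mat_id : mat := (1, 0, 0, 1).
Definition chord_mat (p : pt) : mat := (snd p, - (1 + fst p), 1 - fst p, - snd p).

(* The derivative at the direction of y of the map induced by M on directions. *)
Definition proj_deriv (M : mat) (y : pt) : R := mat_det M * norm2 y / norm2 (mat_app M y).

Lemma norm2_half_pt t : norm2 (half_pt t) = 1.
Proof. unfold norm2, half_pt; cbn [fst snd]. rewrite <- (sin2_cos2 (PI * t)). unfold Rsqr; ring. Qed.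

Lemma norm2_scale l p : norm2 (scale l p) = l ^ 2 * norm2 p.
Proof. unfold norm2, scale; cbn [fst snd]; ring. Qed.

Lemma norm2_pos y : y <> (0, 0) -> 0 < norm2 y.
Proof.
  intros H. pose proof (sqdist_pos y (0, 0) H). unfold sqdist, norm2 in *; cbn [fst snd] in *. lra.
Qed.

Lemma e_sq_dir t : e t = sq_dir (half_pt t).
Proof.
  unfold e, sq_dir. rewrite norm2_half_pt. unfold half_pt; cbn [fst snd].
  replace (2 * PI * t) with (2 * (PI * t)) by ring. rewrite cos_2a, sin_2a. f_equal; field.
Qed.

Lemma wedge_half_pt a b : wedge (half_pt a) (half_pt b) = sin (PI * (b - a)).
Proof.
  unfold wedge, half_pt; cbn [fst snd].
  replace (PI * (b - a)) with (PI * b - PI * a) by ring. rewrite sin_minus. ring.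
Qed.

Lemma wedge_half_pt_add_Z t k : wedge (half_pt t) (half_pt (t + IZR k)) = 0.
Proof.
  rewrite wedge_half_pt. apply sin_eq_0_1. exists k. ring.
Qed.

Lemma sin_PI_neq0 u : 0 < Rabs u < 1 -> sin (PI * u) <> 0.
Proof.
  intros [H1 H2]. pose proof PI_RGT_0. destruct (Rle_or_lt 0 u).
  - rewrite Rabs_right in * by lra. assert (0 < sin (PI * u)) by (apply sin_gt_0; nra). lra.
  - rewrite Rabs_left in * by lra. replace (PI * u) with (- (PI * - u)) by ring. rewrite sin_neg.
    assert (0 < sin (PI * - u)) by (apply sin_gt_0; nra). lra.
Qed.

Lemma mat_app_mul M N y : mat_app (mat_mul M N) y = mat_app M (mat_app N y).
Proof.
  destruct M as [[[a b] c] d], N as [[[a' b'] c'] d']; unfold mat_app, mat_mul; cbn [fst snd].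
  f_equal; ring.
Qed.

Lemma mat_det_mul M N : mat_det (mat_mul M N) = mat_det M * mat_det N.
Proof. destruct M as [[[a b] c] d], N as [[[a' b'] c'] d']; unfold mat_det, mat_mul; ring. Qed.

Lemma mat_app_id y : mat_app mat_id y = y.
Proof. destruct y; unfold mat_app, mat_id; cbn [fst snd]; f_equal; ring. Qed.

Lemma mat_app_scale M l y : mat_app M (scale l y) = scale l (mat_app M y).
Proof. destruct M as [[[a b] c] d]; unfold mat_app, scale; cbn [fst snd]; f_equal; ring. Qed.

Lemma wedge_mat_app M x y : wedge (mat_app M x) (mat_app M y) = mat_det M * wedge x y.
Proof. destruct M as [[[a b] c] d]; unfold wedge, mat_app, mat_det; cbn [fst snd]; ring. Qed.

Lemma mat_det_chord_mat p : mat_det (chord_mat p) = 1 - norm2 p.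
Proof. unfold mat_det, chord_mat, norm2; ring. Qed.

Lemma mat_det_chord_mat_pos p : in_disk p -> 0 < mat_det (chord_mat p).
Proof. intros H. rewrite mat_det_chord_mat. unfold in_disk, norm2 in *. lra. Qed.

Lemma norm2_mat_app_pos M y : mat_det M <> 0 -> 0 < norm2 y -> 0 < norm2 (mat_app M y).
Proof.
  intros Hd Hy. apply norm2_pos. intros E.
  destruct M as [[[a b] c] d], y as [y0 y1]; unfold mat_app, mat_det, norm2 in *; cbn [fst snd] in *.
  injection E; intros E2 E1.
  assert (K1 : (a*d - b*c) * y0 = 0) by
    (transitivity (d * (a*y0 + b*y1) - b * (c*y0 + d*y1)); [ring | rewrite E1, E2; ring]).
  assert (K2 : (a*d - b*c) * y1 = 0) by
    (transitivity (a * (c*y0 + d*y1) - c * (a*y0 + b*y1)); [ring | rewrite E1, E2; ring]).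
  apply Rmult_integral in K1 as [K1|K1]; [contradiction|].
  apply Rmult_integral in K2 as [K2|K2]; [contradiction|]. subst. lra.
Qed.

Lemma wedge_eq0_scale y z : 0 < norm2 y -> wedge y z = 0 -> z = scale (dot y z / norm2 y) y.
Proof.
  unfold wedge, norm2, dot, scale; destruct y as [a b], z as [c d]; cbn [fst snd]; intros H C.
  f_equal; apply (Rmult_eq_reg_r (a^2 + b^2)); try lra; field_simplify; try lra.
  - transitivity (a*(a*c + b*d) - b * (a*d - b*c)); [ring | rewrite C; ring].
  - transitivity (b*(a*c + b*d) + a * (a*d - b*c)); [ring | rewrite C; ring].
Qed.

Lemma wedge_eq0_trans x y z : 0 < norm2 y -> wedge x y = 0 -> wedge y z = 0 -> wedge x z = 0.
Proof.
  intros Hy H1 H2. rewrite (wedge_eq0_scale y z Hy H2).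
  unfold wedge, scale in *; cbn [fst snd].
  transitivity ((dot y z / norm2 y) * (fst x * snd y - snd x * fst y)); [ring | rewrite H1; ring].
Qed.

Lemma sq_dir_eq y z : 0 < norm2 y -> 0 < norm2 z -> sq_dir y = sq_dir z -> wedge y z = 0.
Proof.
  unfold sq_dir, wedge, norm2; destruct y as [a b], z as [c d]; cbn [fst snd]; intros Hy Hz E.
  assert (E1 := f_equal fst E). assert (E2 := f_equal snd E). cbn [fst snd] in E1, E2.
  set (Y := a^2 + b^2) in *. set (Z := c^2 + d^2) in *.
  assert (F1 : (a^2 - b^2) * Z = (c^2 - d^2) * Y).
  { replace (a^2 - b^2) with ((a^2 - b^2) / Y * Y) by (field; lra).
    replace (c^2 - d^2) with ((c^2 - d^2) / Z * Z) by (field; lra). rewrite E1. ring. }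
  assert (F2 : (2*a*b) * Z = (2*c*d) * Y).
  { replace (2*a*b) with (2*a*b / Y * Y) by (field; lra).
    replace (2*c*d) with (2*c*d / Z * Z) by (field; lra). rewrite E2. ring. }
  assert (K : ((a^2 - b^2)*(c^2 - d^2) + (2*a*b)*(2*c*d)) * Y = Y * Y * Z).
  { transitivity ((a^2 - b^2)*((c^2 - d^2)*Y) + (2*a*b)*((2*c*d)*Y)); [ring|].
    rewrite <- F1, <- F2. unfold Y; ring. }
  assert (K2 : (a^2 - b^2)*(c^2 - d^2) + (2*a*b)*(2*c*d) = Y * Z)
    by (apply (Rmult_eq_reg_r Y); lra).
  assert (K3 : 2 * (a*d - b*c)^2 = Y * Z - ((a^2 - b^2)*(c^2 - d^2) + (2*a*b)*(2*c*d)))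
    by (unfold Y, Z; ring).
  nra.
Qed.

Lemma exit_point_sq_dir p y : norm2 y = 1 -> in_disk p ->
  exit_point p (sq_dir y) = sq_dir (mat_app (chord_mat p) y).
Proof.
  intros Hy Hp.
  assert (Hv : on_circle (sq_dir y)).
  { unfold on_circle, sq_dir; rewrite Hy, !Rdiv_1_r.
    unfold norm2 in Hy; destruct y as [a b]; cbn [fst snd] in *.
    transitivity ((a^2 + b^2)^2); [ring | rewrite Hy; ring]. }
  assert (Hd : 0 < norm2 (mat_app (chord_mat p) y)).
  { apply norm2_mat_app_pos; [pose proof (mat_det_chord_mat_pos p Hp); lra | lra]. }
  pose proof (sqdist_pos _ _ (disk_neq_circle _ p Hv Hp)) as Q.
  unfold exit_point, exit_param, line_pt, sqdist, sq_dir, chord_mat, mat_app, norm2, dot, in_disk in *;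
    destruct y as [a b], p as [c d]; cbn [fst snd] in *.
  rewrite Hy, !Rdiv_1_r in Q.
  f_equal; field; rewrite Hy, !Rmult_1_r; repeat split; lra.
Qed.

Lemma cross_sq_dir x y z : norm2 x = 1 -> norm2 y = 1 -> norm2 z = 1 ->
  cross (sq_dir x) (sq_dir y) (sq_dir z) = -4 * wedge x y * wedge y z * wedge z x.
Proof.
  intros Hx Hy Hz. unfold sq_dir. rewrite Hx, Hy, Hz, !Rdiv_1_r. unfold norm2 in *.
  destruct x as [a b], y as [c d], z as [e f]; unfold cross, wedge; cbn [fst snd] in *.
  transitivity (2 * ((a*d - b*c)*(a*c + b*d)*(e^2 + f^2) + (c*f - d*e)*(c*e + d*f)*(a^2 + b^2)
                     + (e*b - f*a)*(e*a + f*b)*(c^2 + d^2))); [rewrite Hx, Hy, Hz; ring | ring].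
Qed.

Lemma chord_mat_line_pt y w l : norm2 y = 1 ->
  mat_app (chord_mat (line_pt (sq_dir y) w l)) y = scale l (mat_app (chord_mat w) y).
Proof.
  intros Hy. unfold sq_dir, chord_mat, mat_app, line_pt, scale. rewrite Hy, !Rdiv_1_r.
  unfold norm2 in Hy. destruct y as [a b], w as [c d]; cbn [fst snd] in *.
  f_equal.
  - transitivity (l * (d * a + - (1 + c) * b) + (1 - l) * (b * (2*a^2 - (1 + (a^2 - b^2))))); [ring|].
    replace (1 + (a^2 - b^2)) with (2*a^2) by lra. ring.
  - transitivity (l * ((1 - c) * a + - d * b) + (1 - l) * (a * (1 - (a^2 - b^2)) - 2 * a * b^2)); [ring|].
    replace (1 - (a^2 - b^2)) with (2*b^2) by lra. ring.
Qed.

Lemma mat_det_chord_mat_line_pt v w l : on_circle v -> on_circle w ->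
  mat_det (chord_mat (line_pt v w l)) = l * (1 - l) * sqdist w v.
Proof.
  intros Hv Hw. rewrite mat_det_chord_mat.
  unfold norm2, on_circle, line_pt, sqdist in *. destruct v as [a b], w as [c d]; cbn [fst snd] in *.
  transitivity (l*(1 - l)*((c - a)^2 + (d - b)^2) + (1 - l)*(1 - (a^2 + b^2)) + l*(1 - (c^2 + d^2)));
    [ring | rewrite Hv, Hw; ring].
Qed.

Lemma proj_deriv_mul M N y : 0 < norm2 y -> 0 < norm2 (mat_app N y) ->
  0 < norm2 (mat_app M (mat_app N y)) ->
  proj_deriv (mat_mul M N) y = proj_deriv M (mat_app N y) * proj_deriv N y.
Proof. intros. unfold proj_deriv. rewrite mat_det_mul, mat_app_mul. field. split; lra. Qed.

Lemma proj_deriv_id y : 0 < norm2 y -> proj_deriv mat_id y = 1.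
Proof. intros. unfold proj_deriv. rewrite mat_app_id. unfold mat_det, mat_id. field. lra. Qed.

Lemma proj_deriv_parallel M y z : 0 < norm2 y -> 0 < norm2 z -> mat_det M <> 0 ->
  wedge y z = 0 -> proj_deriv M z = proj_deriv M y.
Proof.
  intros Hy Hz Hd C. pose proof (wedge_eq0_scale y z Hy C) as Ez.
  set (l := dot y z / norm2 y) in Ez. clearbody l. subst z.
  rewrite norm2_scale in Hz. assert (0 < l ^ 2) by (destruct (Req_dec l 0) as [E|E];
    [rewrite E in Hz; lra | now apply pow2_pos]).
  assert (0 < norm2 (mat_app M y)) by now apply norm2_mat_app_pos.
  unfold proj_deriv. rewrite mat_app_scale, !norm2_scale. field.
  split; [lra | intros ->; lra].
Qed.

(* A matrix with three distinct eigenlines is scalar. *)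
Lemma proj_deriv_three_eigenlines M a b c : 0 < mat_det M ->
  0 < norm2 a -> 0 < norm2 b -> 0 < norm2 c ->
  wedge a b <> 0 -> wedge a c <> 0 -> wedge b c <> 0 ->
  wedge a (mat_app M a) = 0 -> wedge b (mat_app M b) = 0 -> wedge c (mat_app M c) = 0 ->
  proj_deriv M a = 1.
Proof.
  intros Hd Ha Hb Hc Nab Nac Nbc Ea Eb Ec.
  assert (Eig : forall x, 0 < norm2 x -> wedge x (mat_app M x) = 0 ->
    exists l, mat_app M x = scale l x) by (intros x Hx E; eexists; exact (wedge_eq0_scale _ _ Hx E)).
  destruct (Eig a Ha Ea) as [la Xa], (Eig b Hb Eb) as [lb Xb], (Eig c Hc Ec) as [lc Xc].
  assert (K : forall x y l m, mat_app M x = scale l x -> mat_app M y = scale m y ->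
    wedge x y <> 0 -> mat_det M = l * m).
  { intros x y l m H1 H2 N. pose proof (wedge_mat_app M x y) as Q. rewrite H1, H2 in Q.
    unfold wedge, scale in *; cbn [fst snd] in Q.
    apply (Rmult_eq_reg_r (fst x * snd y - snd x * fst y)); [lra | exact N]. }
  assert (K1 := K a b la lb Xa Xb Nab). assert (K2 := K a c la lc Xa Xc Nac).
  assert (K3 := K b c lb lc Xb Xc Nbc).
  assert (la <> 0) by (intros Z; rewrite Z in K1; lra).
  assert (lc <> 0) by (intros Z; rewrite Z in K2; lra).
  assert (la = lb) by (apply (Rmult_eq_reg_r lc); lra).
  unfold proj_deriv. rewrite Xa, norm2_scale, K1. subst lb. field. split; [lra | assumption].
Qed.

(** * One-sided projective derivatives of psi *)

Definition sgn (sg : bool) : R := if sg then 1 else -1.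

Lemma Rabs_sgn_mul sg h : 0 <= h -> Rabs (sgn sg * h) = h.
Proof. intros H. destruct sg; unfold sgn; [rewrite Rmult_1_l, Rabs_right | rewrite Rabs_left1]; lra. Qed.

Lemma continuity_near f x : continuity f -> forall eps, 0 < eps ->
  exists d, 0 < d /\ forall y, Rabs (y - x) < d -> Rabs (f y - f x) < eps.
Proof.
  intros H eps He. destruct (H x eps He) as [d [Hd Hy]]. exists d; split; [exact Hd|].
  intros y Hyd. destruct (Req_dec y x) as [->|Ne]; [rewrite Rminus_diag, Rabs_R0; exact He|].
  apply (Hy y). split; [split; [exact I | auto] | exact Hyd].
Qed.

Lemma continuity_pos_near f x : continuity f -> 0 < f x ->
  exists d, 0 < d /\ forall y, Rabs (y - x) < d -> 0 < f y.
Proof.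
  intros Hc Hp. destruct (continuity_near f x Hc (f x) Hp) as [d [Hd H]].
  exists d; split; [exact Hd|]. intros y Hy. destruct (Rabs_def2 _ _ (H y Hy)). lra.
Qed.

Lemma finite_delta (C : nat -> R -> Prop) n :
  (forall i, (i < n)%nat -> exists d, 0 < d /\ forall h, 0 <= h < d -> C i h) ->
  exists d, 0 < d /\ forall h, 0 <= h < d -> forall i, (i < n)%nat -> C i h.
Proof.
  induction n as [|n IH]; intros H; [exists 1; split; [lra | intros; lia]|].
  destruct IH as [d1 [D1 H1]]; [intros; apply H; lia|].
  destruct (H n ltac:(lia)) as [d2 [D2 H2]].
  exists (Rmin d1 d2); split; [now apply Rmin_glb_lt|]. intros h Hh i Hi.
  pose proof (Rmin_l d1 d2); pose proof (Rmin_r d1 d2).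
  destruct (Nat.eq_dec i n) as [->|Ne]; [apply H2; lra | apply H1; [lra | lia]].
Qed.

Lemma cross_near_chord_start a b sg : 0 < b - a < 1 ->
  exists d, 0 < d /\ forall h, 0 <= h < d -> sgn sg * cross (e a) (e b) (e (a + sgn sg * h)) <= 0.
Proof.
  intros Hab. pose proof PI_RGT_0.
  assert (S1 : 0 < sin (PI * (b - a))) by (apply sin_gt_0; nra).
  destruct (continuity_pos_near (fun c => - sin (PI * (c - b))) a ltac:(reg)) as [d [Hd Hs]].
  { replace (PI * (a - b)) with (- (PI * (b - a))) by ring. rewrite sin_neg. lra. }
  exists (Rmin d 1); split; [apply Rmin_glb_lt; lra|]. intros h [H0 Hh].
  pose proof (Rmin_l d 1); pose proof (Rmin_r d 1).
  assert (Hc : 0 < - sin (PI * (a + sgn sg * h - b))).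
  { apply Hs. replace (a + sgn sg * h - a) with (sgn sg * h) by ring. rewrite Rabs_sgn_mul; lra. }
  assert (Sh : 0 <= sin (PI * h)) by (apply sin_ge_0; nra).
  rewrite !e_sq_dir, cross_sq_dir, !wedge_half_pt by apply norm2_half_pt.
  replace (PI * (a - (a + sgn sg * h))) with (sgn sg * - (PI * h)) by ring.
  assert (Sg : sin (sgn sg * - (PI * h)) = - sgn sg * sin (PI * h)).
  { destruct sg; unfold sgn.
    - replace (1 * - (PI * h)) with (- (PI * h)) by ring. rewrite sin_neg. ring.
    - replace (-1 * - (PI * h)) with (PI * h) by ring. ring. }
  rewrite Sg. assert (sgn sg * sgn sg = 1) by (destruct sg; unfold sgn; ring).
  assert (0 <= sin (PI * (b - a)) * - sin (PI * (a + sgn sg * h - b)) * sin (PI * h))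
    by (apply Rmult_le_pos; [apply Rmult_le_pos|]; lra).
  transitivity (- 4 * (sgn sg * sgn sg)
                * (sin (PI * (b - a)) * - sin (PI * (a + sgn sg * h - b)) * sin (PI * h)));
    [right; ring | nra].
Qed.

Definition chord_coord (v w x : pt) : R :=
  ((fst x - fst v) * (fst w - fst v) + (snd x - snd v) * (snd w - snd v)) / sqdist w v.

Lemma line_pt_chord_coord v w x : w <> v -> cross v w x = 0 -> x = line_pt v w (chord_coord v w x).
Proof.
  intros N C. pose proof (sqdist_pos _ _ N) as Q.
  pose proof (wedge_eq0_scale (fst w - fst v, snd w - snd v) (fst x - fst v, snd x - snd v)) as K.
  unfold norm2, wedge, dot, scale in K; unfold sqdist in Q; cbn [fst snd] in K.
  specialize (K Q C).
  assert (E1 := f_equal fst K). assert (E2 := f_equal snd K). cbn [fst snd] in E1, E2.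
  unfold line_pt, chord_coord, sqdist. destruct x as [x1 x2]. cbn [fst snd] in *.
  f_equal; lra.
Qed.

Lemma chord_coord_line_pt v p l m : v <> p -> l <> 0 ->
  chord_coord v (line_pt v p l) (line_pt v p m) = m / l.
Proof.
  intros N L. pose proof (sqdist_pos _ _ (not_eq_sym N)).
  unfold chord_coord, line_pt, sqdist in *; cbn [fst snd].
  replace ((fst v + l * (fst p - fst v) - fst v) ^ 2 + (snd v + l * (snd p - snd v) - snd v) ^ 2)
    with (l ^ 2 * ((fst p - fst v) ^ 2 + (snd p - snd v) ^ 2)) by ring.
  pose proof (pow2_pos l L). field. split; lra.
Qed.

Lemma line_meets_circle_behind a b : in_disk a -> a <> b ->
  exists t, 0 < t /\ on_circle (line_pt a b (- t)).
Proof.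
  intros Ha Nab. pose proof (sqdist_pos _ _ (not_eq_sym Nab)) as Nd.
  unfold in_disk, on_circle, line_pt, sqdist in *.
  set (d1 := fst b - fst a) in *. set (d2 := snd b - snd a) in *.
  set (ad := fst a * d1 + snd a * d2).
  set (D := ad^2 + (d1^2 + d2^2) * (1 - (fst a^2 + snd a^2))).
  assert (HD : ad^2 < D) by (unfold D; nra).
  pose proof (sqrt_pos D). assert (S2 : sqrt D * sqrt D = D) by (apply sqrt_sqrt; nra).
  assert (- ad < sqrt D) by nra.
  set (t := (ad + sqrt D) / (d1^2 + d2^2)).
  assert (Et : t * (d1^2 + d2^2) = ad + sqrt D) by (unfold t; field; lra).
  exists t. split; [unfold t; apply Rdiv_lt_0_compat; lra|]. cbn [fst snd].
  transitivity ((fst a^2 + snd a^2) - t * (2 * ad - t * (d1^2 + d2^2))); [unfold ad; ring|].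
  rewrite Et. apply (Rmult_eq_reg_r (d1^2 + d2^2)); [|lra].
  transitivity ((fst a^2 + snd a^2) * (d1^2 + d2^2) - (t * (d1^2 + d2^2)) * (ad - sqrt D)); [ring|].
  rewrite Et. transitivity ((fst a^2 + snd a^2) * (d1^2 + d2^2) - (ad^2 - sqrt D * sqrt D)); [ring|].
  rewrite S2. unfold D. ring.
Qed.

Lemma cross_e_continuous x y : continuity (fun t => cross (e t) x y).
Proof. unfold cross, e; cbn [fst snd]. reg. Qed.

Section ChordDynamics.

Variables (n : nat) (P : nat -> pt) (B : pt -> Prop) (F : R -> R).
Hypothesis polyB : convex_polygon n P B.
Hypothesis B_in_disk : forall x, B x -> in_disk x.
Hypothesis n_pos : (0 < n)%nat.
Hypothesis F_cont : continuity F.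
Hypothesis F_lifts_psi : forall t, e (F t) = psi B (e t).
Hypothesis F_disp : forall t, t < F t < t + 1.
Hypothesis F_incr : forall x y, x < y -> F x < F y.

Lemma psi_rel_lift s : psi_rel B (e s) (e (F s)).
Proof. rewrite F_lifts_psi. apply (psi_spec n P); auto using e_on_circle. Qed.

Lemma vertex_left_of_chord s i : (i < n)%nat -> 0 <= cross (e s) (e (F s)) (P i).
Proof.
  intros Hi. destruct (psi_rel_lift s) as [_ [_ [_ L]]].
  apply L, (vertex_in_B n P B polyB i Hi).
Qed.

Lemma vertex_on_chord s i : (i < n)%nat -> cross (e s) (e (F s)) (P i) = 0 ->
  0 < chord_coord (e s) (e (F s)) (P i) < 1 /\
  P i = line_pt (e s) (e (F s)) (chord_coord (e s) (e (F s)) (P i)).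
Proof.
  intros Hi C. destruct (psi_rel_lift s) as [Cw [Nw _]].
  assert (E := line_pt_chord_coord _ _ _ Nw C). split; [|exact E].
  apply (line_pt_in_disk (e s) (e (F s))); auto using e_on_circle.
  rewrite <- E. now apply (vertex_in_disk n P B).
Qed.

(* side_vertex true s (resp. false s) is the vertex on the chord e s -> e (F s)
   nearest to e (F s) (resp. e s); it governs psi just after (resp. before) e s. *)
Definition side_vertex_spec (sg : bool) (s : R) (k : nat) : Prop :=
  (k < n)%nat /\ cross (e s) (e (F s)) (P k) = 0 /\
  forall i, (i < n)%nat -> cross (e s) (e (F s)) (P i) = 0 ->
    sgn sg * (chord_coord (e s) (e (F s)) (P i) - chord_coord (e s) (e (F s)) (P k)) <= 0.

Definition side_vertex (sg : bool) (s : R) : nat :=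
  epsilon (inhabits 0%nat) (side_vertex_spec sg s).
Definition side_pt (sg : bool) (s : R) : pt := P (side_vertex sg s).
Definition side_coord (sg : bool) (s : R) : R := chord_coord (e s) (e (F s)) (side_pt sg s).
Definition side_mat (sg : bool) (s : R) : mat := chord_mat (side_pt sg s).

Lemma side_vertex_correct sg s : side_vertex_spec sg s (side_vertex sg s).
Proof.
  unfold side_vertex. apply epsilon_spec.
  destruct (psi_rel_lift s) as [_ [_ [[u [t [Bu Eu]]] _]]].
  assert (Cu : cross (e s) (e (F s)) u = 0) by (subst u; unfold cross; cbn [fst snd]; ring).
  destruct (in_hull_cross_eq0 _ n P _ _ u (proj1 (proj1 polyB u) Bu) (vertex_left_of_chord s) Cu)
    as [i0 [Hi0 Ci0]].
  destruct (finite_argmin (fun i => cross (e s) (e (F s)) (P i) = 0)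
    (fun i => - sgn sg * chord_coord (e s) (e (F s)) (P i)) n
    (ex_intro _ i0 (conj Hi0 Ci0))) as [k [Hk [Ck Mk]]].
  exists k. split; [exact Hk|]. split; [exact Ck|]. intros i Hi Ci. specialize (Mk i Hi Ci). lra.
Qed.

Lemma side_pt_in_disk sg s : in_disk (side_pt sg s).
Proof. apply (vertex_in_disk n P B); auto. apply side_vertex_correct. Qed.

Lemma side_pt_on_chord sg s : 0 < side_coord sg s < 1 /\
  side_pt sg s = line_pt (e s) (e (F s)) (side_coord sg s).
Proof. destruct (side_vertex_correct sg s) as [Hk [Ck _]]. now apply vertex_on_chord. Qed.

Lemma psi_near_side sg s : exists d, 0 < d /\ forall h, 0 <= h < d ->
  psi B (e (s + sgn sg * h)) = exit_point (side_pt sg s) (e (s + sgn sg * h)).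
Proof.
  destruct (side_vertex_correct sg s) as [Hk [Ck Mk]].
  destruct (side_pt_on_chord sg s) as [Lk Ek].
  (* Vertices strictly left of the chord stay left by continuity; those on the chord stay
     left because the side vertex is the extreme one on the chord. *)
  destruct (finite_delta (fun i h => 0 <= cross (e (s + sgn sg * h)) (side_pt sg s) (P i)) n)
    as [d [Hd Hdd]].
  - intros i Hi. destruct (vertex_left_of_chord s i Hi) as [Cp|C0].
    + assert (Pos : 0 < cross (e s) (side_pt sg s) (P i))
        by (rewrite Ek, cross_line_pt; apply Rmult_lt_0_compat; lra).
      destruct (continuity_pos_near _ s (cross_e_continuous (side_pt sg s) (P i)) Pos) as [d [Hd Hdd]].
      exists d; split; [exact Hd|]. intros h Hh. left. apply Hdd.
      replace (s + sgn sg * h - s) with (sgn sg * h) by ring. rewrite Rabs_sgn_mul; lra.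
    + destruct (cross_near_chord_start s (F s) sg ltac:(specialize (F_disp s); lra)) as [d [Hd Hdd]].
      exists d; split; [exact Hd|]. intros h Hh. specialize (Hdd h Hh).
      destruct (vertex_on_chord s i Hi (eq_sym C0)) as [_ Ei]. specialize (Mk i Hi (eq_sym C0)).
      rewrite Ek, Ei, cross_line_pts.
      unfold side_coord, side_pt.
      set (ci := chord_coord (e s) (e (F s)) (P i)) in *.
      set (ck := chord_coord (e s) (e (F s)) (P (side_vertex sg s))) in *.
      replace ((ci - ck) * cross (e s) (e (F s)) (e (s + sgn sg * h)))
        with ((sgn sg * (ci - ck)) * (sgn sg * cross (e s) (e (F s)) (e (s + sgn sg * h))))
        by (destruct sg; unfold sgn; ring).
      nra.
  - exists d; split; [exact Hd|]. intros h Hh.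
    apply (psi_eq_exit_point n P B); auto using e_on_circle.
Qed.

Lemma psi_eq_side sg s : psi B (e s) = exit_point (side_pt sg s) (e s).
Proof.
  destruct (psi_near_side sg s) as [d [Hd H]]. specialize (H 0 ltac:(lra)).
  rewrite Rmult_0_r, Rplus_0_r in H. exact H.
Qed.

Lemma side_mat_det_pos sg s : 0 < mat_det (side_mat sg s).
Proof. apply mat_det_chord_mat_pos, side_pt_in_disk. Qed.

Lemma wedge_side_mat sg s t : psi B (e t) = exit_point (side_pt sg s) (e t) ->
  wedge (half_pt (F t)) (mat_app (side_mat sg s) (half_pt t)) = 0.
Proof.
  intros E. pose proof (side_mat_det_pos sg s).
  apply sq_dir_eq;
    [rewrite norm2_half_pt; lra | apply norm2_mat_app_pos; [lra | rewrite norm2_half_pt; lra] |].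
  rewrite <- e_sq_dir, F_lifts_psi, E, e_sq_dir.
  apply exit_point_sq_dir; [apply norm2_half_pt | apply side_pt_in_disk].
Qed.

Lemma one_sided_image s sg d : 0 < d -> exists d', 0 < d' /\ forall h, 0 <= h < d' ->
  exists h', 0 <= h' < d /\ F (s + sgn sg * h) = F s + sgn sg * h'.
Proof.
  intros Hd. destruct (continuity_near F s F_cont d Hd) as [d' [Hd' H]].
  exists d'; split; [exact Hd'|]. intros h Hh.
  specialize (H (s + sgn sg * h)). replace (s + sgn sg * h - s) with (sgn sg * h) in H by ring.
  rewrite Rabs_sgn_mul in H by lra. specialize (H (proj2 Hh)).
  exists (sgn sg * (F (s + sgn sg * h) - F s)). split; [|destruct sg; unfold sgn; ring].
  destruct Hh as [[Hh|<-] _]; [|rewrite Rmult_0_r, Rplus_0_r; split; lra].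
  destruct sg; unfold sgn in *.
  - assert (F s < F (s + 1 * h)) by (apply F_incr; lra). rewrite Rabs_right in H; lra.
  - assert (F (s + -1 * h) < F s) by (apply F_incr; lra). rewrite Rabs_left in H; lra.
Qed.

Fixpoint orbit_mat (sg : bool) (s : R) (m : nat) : mat :=
  match m with
  | O => mat_id
  | S m' => mat_mul (orbit_mat sg (F s) m') (side_mat sg s)
  end.

Lemma orbit_mat_det_pos sg m s : 0 < mat_det (orbit_mat sg s m).
Proof.
  revert s; induction m as [|m IH]; intros s; simpl; [unfold mat_det, mat_id; lra|].
  rewrite mat_det_mul. apply Rmult_lt_0_compat; [apply IH | apply side_mat_det_pos].
Qed.

(* In half-angle coordinates, psi^m is the projective action of orbit_mat sg s m on the
   sg side of s (wedge x y = 0 says that x and y span the same line). *)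
Lemma orbit_mat_near sg m s : exists d, 0 < d /\ forall h, 0 <= h < d ->
  wedge (half_pt (Nat.iter m F (s + sgn sg * h)))
        (mat_app (orbit_mat sg s m) (half_pt (s + sgn sg * h))) = 0.
Proof.
  revert s; induction m as [|m IH]; intros s.
  - exists 1; split; [lra|]. intros h _. cbn [orbit_mat]. rewrite mat_app_id.
    change (Nat.iter 0 F ?x) with x. unfold wedge; ring.
  - destruct (psi_near_side sg s) as [d1 [Hd1 H1]].
    destruct (IH (F s)) as [d2 [Hd2 H2]].
    destruct (one_sided_image s sg d2 Hd2) as [d3 [Hd3 H3]].
    exists (Rmin d1 d3); split; [now apply Rmin_glb_lt|]. intros h Hh.
    pose proof (Rmin_l d1 d3); pose proof (Rmin_r d1 d3).
    set (t := s + sgn sg * h) in *.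
    assert (Step := wedge_side_mat sg s t (H1 h ltac:(lra))).
    destruct (H3 h ltac:(lra)) as [h' [Hh' Eh']]. specialize (H2 h' Hh'). rewrite <- Eh' in H2.
    pose proof (orbit_mat_det_pos sg m (F s)).
    rewrite Nat.iter_succ_r. cbn [orbit_mat]. rewrite mat_app_mul.
    apply wedge_eq0_trans with (mat_app (orbit_mat sg (F s) m) (half_pt (F t))); [| exact H2 |].
    + apply norm2_mat_app_pos; [lra | rewrite norm2_half_pt; lra].
    + rewrite wedge_mat_app, Step. ring.
Qed.

Definition chord_factor (s : R) : R :=
  sqdist (e (F s)) (e s) / norm2 (mat_app (chord_mat (e (F s))) (half_pt s)).

Lemma side_mat_half_pt sg s :
  mat_app (side_mat sg s) (half_pt s) = scale (side_coord sg s) (mat_app (chord_mat (e (F s))) (half_pt s)).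
Proof.
  unfold side_mat. rewrite (proj2 (side_pt_on_chord sg s)), e_sq_dir.
  apply chord_mat_line_pt, norm2_half_pt.
Qed.

Lemma norm2_chord_mat_lift_pos s : 0 < norm2 (mat_app (chord_mat (e (F s))) (half_pt s)).
Proof.
  pose proof (side_mat_det_pos true s). pose proof (proj1 (side_pt_on_chord true s)).
  assert (Pos := norm2_mat_app_pos (side_mat true s) (half_pt s)
    ltac:(lra) ltac:(rewrite norm2_half_pt; lra)).
  rewrite side_mat_half_pt, norm2_scale in Pos.
  apply (Rmult_lt_reg_l (side_coord true s ^ 2)); nra.
Qed.

Lemma chord_factor_pos s : 0 < chord_factor s.
Proof.
  destruct (psi_rel_lift s) as [_ [Nw _]].
  apply Rdiv_lt_0_compat; [now apply sqdist_pos | apply norm2_chord_mat_lift_pos].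
Qed.

Lemma proj_deriv_side sg s : proj_deriv (side_mat sg s) (half_pt s) =
  (1 - side_coord sg s) / side_coord sg s * chord_factor s.
Proof.
  pose proof (proj1 (side_pt_on_chord sg s)). pose proof (norm2_chord_mat_lift_pos s).
  unfold chord_factor.
  unfold proj_deriv. rewrite side_mat_half_pt, norm2_scale, norm2_half_pt.
  unfold side_mat. rewrite (proj2 (side_pt_on_chord sg s)) at 1.
  rewrite mat_det_chord_mat_line_pt by apply e_on_circle.
  field. split; lra.
Qed.

Lemma side_coord_le s : side_coord false s <= side_coord true s.
Proof.
  destruct (side_vertex_correct true s) as [Hk [Ck _]].
  destruct (side_vertex_correct false s) as [_ [_ M]].
  specialize (M _ Hk Ck). unfold sgn, side_coord, side_pt in *. lra.
Qed.

Lemma proj_deriv_side_pos sg s : 0 < proj_deriv (side_mat sg s) (half_pt s).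
Proof.
  rewrite proj_deriv_side. pose proof (proj1 (side_pt_on_chord sg s)). pose proof (chord_factor_pos s).
  apply Rmult_lt_0_compat; [apply Rdiv_lt_0_compat|]; lra.
Qed.

(* The map c |-> (1 - c) / c is decreasing. *)
Lemma proj_deriv_side_le s :
  proj_deriv (side_mat true s) (half_pt s) <= proj_deriv (side_mat false s) (half_pt s) /\
  (side_coord false s < side_coord true s ->
   proj_deriv (side_mat true s) (half_pt s) < proj_deriv (side_mat false s) (half_pt s)).
Proof.
  rewrite !proj_deriv_side. pose proof (side_coord_le s) as O. pose proof (chord_factor_pos s).
  pose proof (proj1 (side_pt_on_chord true s)). pose proof (proj1 (side_pt_on_chord false s)).
  set (a := side_coord true s) in *. set (b := side_coord false s) in *.
  assert (E : forall c, 0 < c -> (1 - c) / c = / c - 1) by (intros; field; lra).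
  rewrite !E by lra. split.
  - apply Rmult_le_compat_r; [lra|]. apply Rplus_le_compat_r, Rinv_le_contravar; lra.
  - intros Lt. apply Rmult_lt_compat_r; [lra|]. apply Rplus_lt_compat_r, Rinv_lt_contravar; nra.
Qed.

Lemma proj_deriv_orbit_mat_S sg m s :
  proj_deriv (orbit_mat sg s (S m)) (half_pt s) =
  proj_deriv (orbit_mat sg (F s) m) (half_pt (F s)) * proj_deriv (side_mat sg s) (half_pt s).
Proof.
  assert (Par := wedge_side_mat sg s s (psi_eq_side sg s)).
  pose proof (side_mat_det_pos sg s). pose proof (orbit_mat_det_pos sg m (F s)).
  assert (N1 : 0 < norm2 (mat_app (side_mat sg s) (half_pt s)))
    by (apply norm2_mat_app_pos; [lra | rewrite norm2_half_pt; lra]).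
  cbn [orbit_mat]. rewrite proj_deriv_mul; [| rewrite norm2_half_pt; lra | exact N1 |].
  - f_equal. apply proj_deriv_parallel; [rewrite norm2_half_pt; lra | exact N1 | lra | exact Par].
  - apply norm2_mat_app_pos; [lra | exact N1].
Qed.

Lemma proj_deriv_orbit_mat_le m s :
  proj_deriv (orbit_mat true s m) (half_pt s) <= proj_deriv (orbit_mat false s m) (half_pt s) /\
  0 < proj_deriv (orbit_mat true s m) (half_pt s).
Proof.
  revert s; induction m as [|m IH]; intros s.
  - cbn [orbit_mat]. rewrite proj_deriv_id by (rewrite norm2_half_pt; lra). lra.
  - rewrite !proj_deriv_orbit_mat_S. destruct (IH (F s)) as [A1 A2].
    destruct (proj_deriv_side_le s) as [B1 _]. pose proof (proj_deriv_side_pos true s).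
    split; [apply Rmult_le_compat; lra | now apply Rmult_lt_0_compat].
Qed.

Lemma proj_deriv_orbit_mat_lt m s : side_coord false s < side_coord true s ->
  proj_deriv (orbit_mat true s (S m)) (half_pt s) < proj_deriv (orbit_mat false s (S m)) (half_pt s).
Proof.
  intros Lt. rewrite !proj_deriv_orbit_mat_S.
  destruct (proj_deriv_orbit_mat_le m (F s)) as [A1 A2].
  destruct (proj_deriv_side_le s) as [_ Strict]. specialize (Strict Lt).
  pose proof (proj_deriv_side_pos true s).
  apply Rle_lt_trans with (proj_deriv (orbit_mat false (F s) m) (half_pt (F s))
                           * proj_deriv (side_mat true s) (half_pt s));
    [apply Rmult_le_compat_r | apply Rmult_lt_compat_l]; lra.
Qed.

(* If psi^q is the identity, near s on either side orbit_mat sg s q fixes three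
   directions and hence acts trivially on directions. *)
Lemma proj_deriv_orbit_mat_periodic sg q s : (forall t, exists k, Nat.iter q F t = t + IZR k) ->
  proj_deriv (orbit_mat sg s q) (half_pt s) = 1.
Proof.
  intros Hq. destruct (orbit_mat_near sg q s) as [d [Hd H]].
  set (M := orbit_mat sg s q) in *.
  assert (Fix : forall h, 0 <= h < d ->
    wedge (half_pt (s + sgn sg * h)) (mat_app M (half_pt (s + sgn sg * h))) = 0).
  { intros h Hh. specialize (H h Hh). destruct (Hq (s + sgn sg * h)) as [k Hk]. rewrite Hk in H.
    apply wedge_eq0_trans with (half_pt (s + sgn sg * h + IZR k));
      [rewrite norm2_half_pt; lra | | exact H].
    apply wedge_half_pt_add_Z. }
  pose proof (Rmin_l d 1). pose proof (Rmin_r d 1). pose proof (Rmin_glb_lt d 1 0 Hd Rlt_0_1).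
  set (d' := Rmin d 1) in *.
  assert (W : forall a b, 0 < b - a < 1 ->
    wedge (half_pt (s + sgn sg * a)) (half_pt (s + sgn sg * b)) <> 0).
  { intros a b Hab. rewrite wedge_half_pt. apply sin_PI_neq0.
    replace (s + sgn sg * b - (s + sgn sg * a)) with (sgn sg * (b - a)) by ring.
    rewrite Rabs_sgn_mul; lra. }
  assert (E0 : half_pt s = half_pt (s + sgn sg * 0)) by (f_equal; ring).
  rewrite E0. apply (proj_deriv_three_eigenlines M _ (half_pt (s + sgn sg * (d' / 3)))
                                                   (half_pt (s + sgn sg * (2 * d' / 3))));
    try (rewrite norm2_half_pt; lra); try (apply W; lra); try (apply Fix; lra).
  apply orbit_mat_det_pos.
Qed.

(* At the point of S^1 behind an edge [A, Bp] of B, the chord of psi contains the whole edge. *)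
Lemma side_coords_differ : (2 <= n)%nat -> exists s, side_coord false s < side_coord true s.
Proof.
  intros Hn. destruct (edge_exists n P B polyB Hn) as [ia [ib [Ha [Hb [Nab Lab]]]]].
  set (A := P ia) in *. set (Bp := P ib) in *.
  assert (DA : in_disk A) by now apply (vertex_in_disk n P B).
  destruct (line_meets_circle_behind A Bp DA Nab) as [ta [Hta Ca]].
  set (a := line_pt A Bp (- ta)) in *.
  assert (NaA : a <> A) by (apply not_eq_sym, disk_neq_circle; assumption).
  assert (Xa : forall X, cross a A X = ta * cross A Bp X)
    by (intros; unfold cross, a, line_pt; cbn [fst snd]; ring).
  assert (EA : A = line_pt a A 1) by (unfold line_pt; destruct A; cbn [fst snd]; f_equal; ring).
  assert (EB : Bp = line_pt a A ((1 + ta) / ta)).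
  { unfold a, line_pt; cbn [fst snd]; destruct Bp, A; cbn [fst snd]. f_equal; field; lra. }
  destruct (e_surj a Ca) as [t0 Et0]. exists t0.
  set (tau := exit_param A a). assert (Tpos : 0 < tau) by now apply exit_param_pos.
  assert (Ew : e (F t0) = line_pt a A tau).
  { rewrite F_lifts_psi, Et0. apply (psi_eq_exit_point n P B); auto.
    intros i Hi. rewrite Xa. apply Rmult_le_pos; [lra | auto]. }
  assert (OnChord : forall m, cross (e t0) (e (F t0)) (line_pt a A m) = 0).
  { intros m. rewrite Et0, Ew, cross_line_pt, cross_at_line_pt. unfold cross; ring. }
  assert (Coord : forall m, chord_coord (e t0) (e (F t0)) (line_pt a A m) = m / tau).
  { intros m. rewrite Et0, Ew. apply chord_coord_line_pt; [exact NaA | lra]. }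
  destruct (side_vertex_correct true t0) as [_ [_ Mt]].
  destruct (side_vertex_correct false t0) as [_ [_ Mf]].
  specialize (Mt ib Hb). specialize (Mf ia Ha). fold A Bp in Mt, Mf.
  rewrite EB in Mt. rewrite EA in Mf. rewrite Coord in Mt, Mf.
  specialize (Mt (OnChord _)). specialize (Mf (OnChord _)).
  unfold sgn, side_coord, side_pt in *.
  assert (1 / tau < (1 + ta) / ta / tau).
  { unfold Rdiv. apply Rmult_lt_compat_r; [now apply Rinv_0_lt_compat|].
    apply (Rmult_lt_reg_r ta); [lra|]. field_simplify; lra. }
  lra.
Qed.

Lemma no_periodic_lift q : (2 <= n)%nat -> (0 < q)%nat ->
  ~ (forall t, exists k, Nat.iter q F t = t + IZR k).
Proof.
  intros Hn Hq Per. destruct q as [|m]; [lia|].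
  destruct (side_coords_differ Hn) as [s Lt].
  pose proof (proj_deriv_orbit_mat_lt m s Lt) as D.
  rewrite !proj_deriv_orbit_mat_periodic in D by exact Per. lra.
Qed.

End ChordDynamics.

Theorem lemma2p7 (n : nat) (P : nat -> pt) (B : pt -> Prop) :
  (2 <= n)%nat ->
  convex_polygon n P B ->
  (forall x, B x -> in_disk x) ->
  (exists r, is_rational r /\ rotation_number_is (psi B) r) ->
  ~ conj_to_rotation (psi B).
Proof.
  intros Hn Hpoly Hdisk [r [[p [q [Hq Hr]]] [F [[Fc [Fl F0]] Fcv]]]] Hconj.
  assert (psi_circle : forall v, on_circle v -> on_circle (psi B v) /\ psi B v <> v)
    by (intros v Hv; destruct (psi_spec n P B Hpoly Hdisk v ltac:(lia) Hv) as [? [? _]]; auto).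
  assert (Fdisp := lift_displacement_bounds (psi B) F Fc Fl F0
    (fun t => proj2 (psi_circle _ (e_on_circle t)))).
  assert (F1 := lift_add_1 (psi B) F Fl Fdisp).
  set (m := Z.to_nat q).
  assert (Qm : IZR q = INR m) by (unfold m; rewrite INR_IZR_INZ; f_equal; lia).
  destruct (periodic_point F F1 m (IZR p) r ltac:(lia) ltac:(rewrite <- Qm; exact Hr) Fc (Fcv 0))
    as [x0 Hx0].
  assert (Per : forall x, on_circle x -> Nat.iter m (psi B) x = x).
  { apply (conj_rotation_periodic _ _ (e x0));
      [intros; now apply psi_circle | exact Hconj | apply e_on_circle |].
    rewrite <- (e_iter _ F Fl), Hx0. apply e_add_Z. }
  assert (Finc := lift_increasing F F1 Fc
    (lift_injective_of_periodic F F1 (psi B) m ltac:(lia) Fl Per)).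
  apply (no_periodic_lift n P B F Hpoly Hdisk ltac:(lia) Fc Fl Fdisp Finc m Hn ltac:(lia)).
  intros t. apply e_eq_Z. rewrite (e_iter _ F Fl). apply Per, e_on_circle.
Qed.
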